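(* Let $A, B, C, F \in \mathbb{R}^{n\times n}$ with $B$ and $C$ invertible, and suppose $\sigma_{\min}(B^{-1}AC^{-1}) > 1$. Then the matrix equation $$AX + B\lvert CX\rvert = F$$ has exactly one solution $X \in \mathbb{R}^{n\times n}$.
   Context: $\sigma_{\min}(\cdot)$ is the smallest singular value and $\lvert M\rvert$ the entrywise absolute value of a matrix $M$. *)

From HB Require Import structures.
From mathcomp Require Import all_boot all_order all_algebra.
From mathcomp Require Import boolp classical_sets reals.
Set Implicit Arguments. Unset Strict Implicit. Unset Printing Implicit Defensive.
Import Order.TTheory GRing.Theory Num.Theory.
Local Open Scope ring_scope.
Local Open Scope classical_set_scope.

Definition sigma_min (R : realType) (n : nat) (M : 'M[R]_n) : R :=
  Num.sqrt (inf [set a : R | eigenvalue (M^T *m M) a]).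

Definition mx_abs (R : realType) (m n : nat) (M : 'M[R]_(m, n)) : 'M[R]_(m, n) :=
  map_mx (fun x => `|x|) M.

(* Put M := B^-1 A C^-1 and Y := C X; the equation becomes M Y + |Y| = B^-1 F.
   The infimum of the Rayleigh quotient of M^T M is one of its eigenvalues (else
   M^T M minus it would be positive semidefinite and invertible, hence coercive),
   so ||M Y||^2 >= s^2 ||Y||^2 in the Frobenius norm, with s := sigma_min M > 1.
   Since Y |-> |Y| is 1-Lipschitz, uniqueness follows and
   Y |-> M^-1 (B^-1 F - |Y|) is a contraction; Banach's theorem, applied to an
   iterate that contracts the max-entry norm, gives the solution. *)

From HB Require Import structures.
From mathcomp Require Import all_boot all_order all_algebra.
From mathcomp Require Import boolp classical_sets reals.
From mathcomp Require Import functions interval_inference topology normedtype sequences.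
From mathcomp Require Import ring lra.
Import Order.TTheory GRing.Theory Num.Theory numFieldNormedType.Exports.
Set Implicit Arguments.
Unset Strict Implicit.
Unset Printing Implicit Defensive.

Local Open Scope ring_scope.
Local Open Scope classical_set_scope.

Lemma nonneg_quadratic_discriminant (R : realFieldType) (a b c : R) : 0 <= c ->
  (forall t, 0 <= a + 2 * t * b + t ^+ 2 * c) -> b ^+ 2 <= a * c.
Proof.
move=> c_ge0 quad_ge0; have [c0|c_gt0] := eqVneq c 0.
  have [->|b_neq0] := eqVneq b 0; first by rewrite expr0n /= c0 mulr0.
  have := quad_ge0 (- (a + 1) / (2 * b)).
  have -> : 2 * (- (a + 1) / (2 * b)) * b = - (a + 1) by field.
  by rewrite c0 mulr0 addr0; lra.
have := quad_ge0 (- b / c).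
have : c * (- b / c) = - b by field.
set t := - b / c; have : 0 < c by rewrite lt_def c_gt0.
nra.
Qed.

Lemma sum_CauchySchwarz (R : realFieldType) (I : finType) (a b : I -> R) :
  (\sum_i a i * b i) ^+ 2 <= (\sum_i a i ^+ 2) * \sum_i b i ^+ 2.
Proof.
apply: nonneg_quadratic_discriminant; first by apply: sumr_ge0 => i _; exact: sqr_ge0.
move=> t; have : 0 <= \sum_i (a i + t * b i) ^+ 2.
  by apply: sumr_ge0 => i _; exact: sqr_ge0.
congr (_ <= _); rewrite !mulr_sumr -!big_split /=; apply: eq_bigr => i _.
by rewrite sqrrD exprMn mulr2n; ring.
Qed.

Definition mxdot (R : ringType) m n (Y Z : 'M[R]_(m, n)) : R := \tr (Y^T *m Z).

Local Notation "''[' Y , Z ]" := (mxdot Y Z).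
Local Notation "''[' Y ]" := (mxdot Y Y).

Section Frobenius.
Variable R : realFieldType.

Lemma mxdotE m n (Y Z : 'M[R]_(m, n)) : '[Y, Z] = \sum_i \sum_j Y i j * Z i j.
Proof.
rewrite exchange_big; apply: eq_bigr => j _; rewrite !mxE.
by apply: eq_bigr => i _; rewrite mxE.
Qed.

Lemma mxdotC m n (Y Z : 'M[R]_(m, n)) : '[Y, Z] = '[Z, Y].
Proof.
by rewrite !mxdotE; apply: eq_bigr => i _; apply: eq_bigr => j _; rewrite mulrC.
Qed.

Lemma mxdot0l m n (Z : 'M[R]_(m, n)) : '[0, Z] = 0.
Proof. by rewrite /mxdot trmx0 mul0mx mxtrace0. Qed.

Lemma mxdotDr m n (Y Z W : 'M[R]_(m, n)) : '[Y, Z + W] = '[Y, Z] + '[Y, W].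
Proof. by rewrite /mxdot mulmxDr mxtraceD. Qed.

Lemma mxdotNr m n (Y Z : 'M[R]_(m, n)) : '[Y, - Z] = - '[Y, Z].
Proof. by rewrite /mxdot mulmxN raddfN. Qed.

Lemma mxdotZr m n a (Y Z : 'M[R]_(m, n)) : '[Y, a *: Z] = a * '[Y, Z].
Proof. by rewrite /mxdot -scalemxAr mxtraceZ. Qed.

Lemma mxdotBr m n (Y Z W : 'M[R]_(m, n)) : '[Y, Z - W] = '[Y, Z] - '[Y, W].
Proof. by rewrite mxdotDr mxdotNr. Qed.

Lemma mxdotDl m n (Y Z W : 'M[R]_(m, n)) : '[Y + Z, W] = '[Y, W] + '[Z, W].
Proof. by rewrite mxdotC mxdotDr !(mxdotC W). Qed.

Lemma mxdotBl m n (Y Z W : 'M[R]_(m, n)) : '[Y - Z, W] = '[Y, W] - '[Z, W].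
Proof. by rewrite mxdotC mxdotBr !(mxdotC W). Qed.

Lemma mxdotZl m n a (Y Z : 'M[R]_(m, n)) : '[a *: Y, Z] = a * '[Y, Z].
Proof. by rewrite mxdotC mxdotZr mxdotC. Qed.

Lemma mxdotN m n (Y : 'M[R]_(m, n)) : '[- Y] = '[Y].
Proof. by rewrite mxdotNr mxdotC mxdotNr opprK. Qed.

Lemma mxdot_trmull m n p (N : 'M[R]_(p, m)) (Y : 'M[R]_(m, n)) Z :
  '[N *m Y, Z] = '[Y, N^T *m Z].
Proof. by rewrite /mxdot trmx_mul mulmxA. Qed.

Lemma mxdot_sqrE m n (Y : 'M[R]_(m, n)) : '[Y] = \sum_i \sum_j Y i j ^+ 2.
Proof.
by rewrite mxdotE; apply: eq_bigr => i _; apply: eq_bigr => j _; rewrite expr2.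
Qed.

Lemma mxdot_ge0 m n (Y : 'M[R]_(m, n)) : 0 <= '[Y].
Proof.
by rewrite mxdot_sqrE; apply: sumr_ge0 => i _; apply: sumr_ge0 => j _; exact: sqr_ge0.
Qed.

Lemma mxdot_eq0 m n (Y : 'M[R]_(m, n)) : ('[Y] == 0) = (Y == 0).
Proof.
apply/idP/eqP => [|->]; last by rewrite mxdot0l.
rewrite mxdot_sqrE psumr_eq0 => [/allP Y0|i _]; last first.
  by apply: sumr_ge0 => j _; exact: sqr_ge0.
apply/matrixP => i j; have /implyP/(_ isT) := Y0 i (mem_index_enum i).
rewrite psumr_eq0 => [/allP/(_ j (mem_index_enum j))|j' _]; last exact: sqr_ge0.
by rewrite mxE sqrf_eq0 => /eqP.
Qed.

Lemma mxdot_gt0 m n (Y : 'M[R]_(m, n)) : (0 < '[Y]) = (Y != 0).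
Proof. by rewrite lt_def mxdot_ge0 mxdot_eq0 andbT. Qed.

Lemma mxdot_entry_le m n (Y : 'M[R]_(m, n)) i j : Y i j ^+ 2 <= '[Y].
Proof.
have sum_ge0 i' : 0 <= \sum_j' Y i' j' ^+ 2 by apply: sumr_ge0 => ? _; exact: sqr_ge0.
rewrite mxdot_sqrE (bigD1 i) //= (bigD1 j) //= -addrA lerDl.
by apply: addr_ge0; [apply: sumr_ge0 => ? _; exact: sqr_ge0 | exact: sumr_ge0].
Qed.

Lemma mxdot_map_norm_le m n (Y Z : 'M[R]_(m, n)) :
  '[map_mx Num.norm Y - map_mx Num.norm Z] <= '[Y - Z].
Proof.
rewrite !mxdot_sqrE; apply: ler_sum => i _; apply: ler_sum => j _; rewrite !mxE.
rewrite -[leLHS]real_normK ?num_real // -[leRHS]real_normK ?num_real //.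
by rewrite lerXn2r ?nnegrE ?normr_ge0 // ler_dist_dist.
Qed.

Lemma mxdot_mulmx_le m n p (N : 'M[R]_(p, m)) (Y : 'M[R]_(m, n)) :
  '[N *m Y] <= '[N] * '[Y].
Proof.
rewrite !mxdot_sqrE mulr_suml; apply: ler_sum => k _.
rewrite exchange_big mulr_sumr; apply: ler_sum => j _.
by rewrite mxE (sum_CauchySchwarz (N k) (Y ^~ j)).
Qed.

Section Semidefinite.
Variables (m n : nat) (T : 'M[R]_m).
Implicit Types Y Z : 'M[R]_(m, n).
Hypotheses (T_sym : T^T = T) (T_psd : forall Y, 0 <= '[Y, T *m Y]).

Lemma psd_CauchySchwarz Y Z : '[Y, T *m Z] ^+ 2 <= '[Y, T *m Y] * '[Z, T *m Z].
Proof.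
apply: nonneg_quadratic_discriminant; first exact: T_psd.
move=> t; have := T_psd (Y + t *: Z).
rewrite mulmxDr -scalemxAr !(mxdotDl, mxdotDr, mxdotZl, mxdotZr).
have -> : '[Z, T *m Y] = '[Y, T *m Z] by rewrite mxdotC mxdot_trmull T_sym.
by congr (_ <= _); ring.
Qed.

Lemma psd_quadratic_le Y : '[Y, T *m Y] <= (1 + '[T]) * '[Y].
Proof.
have := mxdot_ge0 (Y - T *m Y); rewrite !(mxdotBl, mxdotBr) (mxdotC (T *m Y)).
have := mxdot_mulmx_le T Y; have := T_psd Y; have := mxdot_ge0 T; have := mxdot_ge0 Y.
nra.
Qed.

Lemma psd_mxdot_mul_le Y : '[T *m Y] <= (1 + '[T]) * '[Y, T *m Y].
Proof.
have := psd_CauchySchwarz Y (T *m Y); rewrite -{1}T_sym -mxdot_trmull => CS.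
have {CS} : '[T *m Y] ^+ 2 <= (1 + '[T]) * '[Y, T *m Y] * '[T *m Y].
  apply: le_trans CS _; rewrite [leRHS]mulrAC [leRHS]mulrC.
  by apply: ler_wpM2l; [exact: T_psd | exact: psd_quadratic_le].
have [->|w_neq0] := eqVneq '[T *m Y] 0.
  by rewrite mulr_ge0 ?T_psd // addr_ge0 ?mxdot_ge0.
by rewrite expr2 ler_pM2r // lt_def w_neq0 mxdot_ge0.
Qed.

Lemma unitmx_psd_coercive : T \in unitmx ->
  exists2 c, 0 < c & forall Y, c * '[Y] <= '[Y, T *m Y].
Proof.
move=> T_unit; set K := (1 + '[invmx T]) * (1 + '[T]).
have K_gt0 : 0 < K by rewrite mulr_gt0 // ltr_pwDl // mxdot_ge0.
exists K^-1; first by rewrite invr_gt0.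
move=> Y; rewrite mulrC ler_pdivrMr // mulrC.
have := mxdot_mulmx_le (invmx T) (T *m Y); rewrite mulKmx // => /le_trans; apply.
rewrite /K -mulrA; apply: ler_pM; rewrite ?mxdot_ge0 ?lerDr ?psd_mxdot_mul_le //.
Qed.

End Semidefinite.
End Frobenius.

Section Rayleigh.
Variables (R : realType) (n p : nat) (S : 'M[R]_n).
Implicit Types Y : 'M[R]_(n, p).
Hypotheses (S_sym : S^T = S) (S_psd : forall Y, 0 <= '[Y, S *m Y]).

Definition rayleigh_quotients : set R :=
  [set '[Y, S *m Y] / '[Y] | Y in [set Y : 'M[R]_(n, p) | Y != 0]].

Definition rayleigh_inf : R := inf rayleigh_quotients.

Let rayleigh_lbound : has_lbound rayleigh_quotients.
Proof. by exists 0 => _ [Y _ <-]; rewrite divr_ge0 ?S_psd ?mxdot_ge0. Qed.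

Lemma rayleigh_inf_le Y : rayleigh_inf * '[Y] <= '[Y, S *m Y].
Proof.
have [->|Y_neq0] := eqVneq Y 0; first by rewrite !mxdot0l mulr0.
rewrite -ler_pdivlMr ?mxdot_gt0 //; apply: (ge_inf rayleigh_lbound); by exists Y.
Qed.

Lemma rayleigh_inf_approx e : (0 < n)%N -> (0 < p)%N -> 0 < e ->
  exists2 Y : 'M[R]_(n, p), Y != 0 & '[Y, S *m Y] < (rayleigh_inf + e) * '[Y].
Proof.
move=> n_gt0 p_gt0 e_gt0.
pose J : 'M[R]_(n, p) := const_mx 1.
have ne : rayleigh_quotients !=set0.
  exists ('[J, S *m J] / '[J]), J => //=; apply/eqP.
  by move=> /matrixP/(_ (Ordinal n_gt0) (Ordinal p_gt0))/eqP; rewrite !mxE oner_eq0.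
have [_ [Y Y_neq0 <-] lt_e] := inf_adherent e_gt0 (conj ne rayleigh_lbound).
by exists Y => //; rewrite -ltr_pdivrMr ?mxdot_gt0.
Qed.

Lemma rayleigh_inf_eigenvalue : (0 < n)%N -> (0 < p)%N -> eigenvalue S rayleigh_inf.
Proof.
move=> n_gt0 p_gt0; set mu := rayleigh_inf; set T := S - mu%:M.
have T_sym : T^T = T by rewrite /T linearB /= S_sym tr_scalar_mx.
have qT Y : '[Y, T *m Y] = '[Y, S *m Y] - mu * '[Y].
  by rewrite /T mulmxBl mxdotBr mul_scalar_mx mxdotZr.
have T_psd Y : 0 <= '[Y, T *m Y] by rewrite qT subr_ge0 rayleigh_inf_le.
have T_singular : T \notin unitmx.
  apply/negP => /(unitmx_psd_coercive T_sym T_psd) [c c_gt0 coercive].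
  have [Y Y_neq0] := rayleigh_inf_approx n_gt0 p_gt0 c_gt0.
  have := coercive Y; rewrite qT mulrDl; lra.
move: T_singular; rewrite unitmxE unitfE negbK => /det0P [v v_neq0 vT0].
apply/eigenvalueP; exists v => //.
by apply/eqP; rewrite -subr_eq0 -mul_mx_scalar -mulmxBr vT0.
Qed.

End Rayleigh.

Section SmallestSingularValue.
Variables (R : realType) (n : nat) (M : 'M[R]_n).

Let gram_sym : (M^T *m M)^T = M^T *m M.
Proof. by rewrite trmx_mul trmxK. Qed.

Let gram_mxdot p (Y : 'M[R]_(n, p)) : '[Y, M^T *m M *m Y] = '[M *m Y].
Proof. by rewrite mxdot_trmull mulmxA. Qed.

Lemma gram_eigenvalue_ge0 a : eigenvalue (M^T *m M) a -> 0 <= a.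
Proof.
move=> /eigenvalueP [v vMM v_neq0].
have MMv : M^T *m M *m v^T = a *: v^T by rewrite -gram_sym -trmx_mul vMM linearZ.
have v_gt0 : 0 < '[v^T] by rewrite mxdot_gt0 trmx_eq0.
by rewrite -(pmulr_lge0 _ v_gt0) -mxdotZr -MMv gram_mxdot mxdot_ge0.
Qed.

Lemma sigma_min_sqr_mxdot_le p (Y : 'M[R]_(n, p)) :
  sigma_min M ^+ 2 * '[Y] <= '[M *m Y].
Proof.
have [->|Y_neq0] := eqVneq Y 0; first by rewrite mulmx0 !mxdot0l mulr0.
have n_gt0 : (0 < n)%N by move: Y Y_neq0; case: (n) => // Y; rewrite flatmx0 eqxx.
have p_gt0 : (0 < p)%N by move: Y Y_neq0; case: (p) => // Y; rewrite thinmx0 eqxx.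
have S_psd (Z : 'M[R]_(n, p)) : 0 <= '[Z, M^T *m M *m Z] by rewrite gram_mxdot mxdot_ge0.
have mu_eigen := rayleigh_inf_eigenvalue gram_sym S_psd n_gt0 p_gt0.
have E_lbound : lbound [set a | eigenvalue (M^T *m M) a] 0.
  by move=> a /gram_eigenvalue_ge0.
rewrite /sigma_min sqr_sqrtr; last first.
  by apply: lb_le_inf E_lbound; exists (rayleigh_inf p (M^T *m M)).
rewrite -gram_mxdot; apply: le_trans (rayleigh_inf_le S_psd Y).
by rewrite ler_wpM2r ?mxdot_ge0 //; apply: ge_inf => //; exists 0.
Qed.

End SmallestSingularValue.

Lemma exists_expr_le (R : realType) (q e : R) :
  `|q| < 1 -> 0 < e -> exists k, q ^+ k <= e.
Proof.
move=> q_lt1 e_gt0; have [k _ qk] := cvgr0_norm_le _ (cvg_expr q_lt1) _ e_gt0.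
by exists k; apply: le_trans (ler_norm _) (qk k (leqnn k)).
Qed.

(* The max-entry norm on ['M[R]_(m, n)] and the completeness of matrices over a
   complete type are not joined by the library into a complete normed module. *)
Definition complete_mx (R : realType) m n := 'M[R]_(m, n).
HB.instance Definition _ (R : realType) m n := NormedModule.on (complete_mx R m n).
HB.instance Definition _ (R : realType) m n :=
  Uniform_isComplete.Build (complete_mx R m n) cauchy_cvg.

Section FrobeniusContraction.
Variables (R : realType) (m n : nat).
Implicit Types X Y Z : 'M[R]_(m, n).

Lemma mx_norm_ge0 X : 0 <= mx_norm X.
Proof. exact: (normr_ge0 (X : 'M[R]_(m, n))). Qed.

Lemma sqr_mx_norm_le_mxdot X : mx_norm X ^+ 2 <= '[X].
Proof.
have [->|/mx_norm_neq0 [[i j] ->]] := eqVneq (mx_norm X) 0.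
  by rewrite expr0n mxdot_ge0.
by rewrite real_normK ?num_real // mxdot_entry_le.
Qed.

Lemma mxdot_le_mx_norm X : '[X] <= (m * n)%:R * mx_norm X ^+ 2.
Proof.
have entry_le i j : `|X i j| <= mx_norm X.
  by rewrite mx_normrE; exact: (le_bigmax _ _ (i, j)).
have -> : (m * n)%:R * mx_norm X ^+ 2 = \sum_(i < m) \sum_(j < n) mx_norm X ^+ 2.
  by rewrite !sumr_const !card_ord -mulrnA mulr_natl mulnC.
rewrite mxdot_sqrE; apply: ler_sum => i _; apply: ler_sum => j _.
by rewrite -[leLHS]real_normK ?num_real // lerXn2r ?nnegrE ?normr_ge0 ?mx_norm_ge0.
Qed.

Section Contraction.
Variables (f : 'M[R]_(m, n) -> 'M[R]_(m, n)) (q : R).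
Hypotheses (q_ge0 : 0 <= q) (q_lt1 : q < 1).
Hypothesis f_contr : forall Y Z, '[f Y - f Z] <= q * '[Y - Z].

Lemma mxdot_iter_contraction k Y Z : '[iter k f Y - iter k f Z] <= q ^+ k * '[Y - Z].
Proof.
elim: k => [|k IHk]; first by rewrite expr0 mul1r.
by rewrite exprS -mulrA; apply: le_trans (f_contr _ _) _; rewrite ler_wpM2l.
Qed.

(* Squared Frobenius and max-entry norms agree up to the factor [m * n]. *)
Lemma iter_mx_norm_half : exists k, forall Y Z,
  mx_norm (iter k f Y - iter k f Z) <= 2^-1 * mx_norm (Y - Z).
Proof.
set c : R := (m * n)%:R; have c_ge0 : 0 <= c by [].
have e_gt0 : 0 < (4 * (1 + c))^-1 by rewrite invr_gt0 mulr_gt0 // ltr_pwDl.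
have q_norm_lt1 : `|q| < 1 by rewrite ger0_norm.
have [k qk] := exists_expr_le q_norm_lt1 e_gt0.
have qk_small : q ^+ k * c <= 4^-1.
  apply: le_trans (ler_wpM2r c_ge0 qk) _.
  rewrite invfM -mulrA ler_piMr ?invr_ge0 // mulrC ler_pdivrMr ?mul1r ?lerDr //.
  by rewrite ltr_pwDl.
exists k => Y Z.
rewrite -(@ler_pXn2r _ 2) ?nnegrE ?mulr_ge0 ?invr_ge0 ?mx_norm_ge0 // exprMn.
apply: le_trans (sqr_mx_norm_le_mxdot _) _.
apply: le_trans (mxdot_iter_contraction _ _ _) _.
apply: le_trans (ler_wpM2l (exprn_ge0 _ q_ge0) (mxdot_le_mx_norm _)) _.
rewrite mulrA; apply: le_trans (ler_wpM2r (sqr_ge0 _) qk_small) _.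
by rewrite exprVn -natrX.
Qed.

Lemma mxdot_contraction_fixed : exists Y, f Y = Y.
Proof.
have [k half_contr] := iter_mx_norm_half.
pose g : complete_mx R m n -> complete_mx R m n := iter k f.
have g_contr : is_contraction
    (totalfun g : {fun [set: complete_mx R m n] >-> [set: complete_mx R m n]}).
  by exists (2^-1 : R)%:nng; split => [|[Y Z] _] /=; [lra | exact: half_contr].
have [Z _ gZ] := banach_fixed_point g_contr closedT (ex_intro _ 0 I).
exists Z; apply/eqP; rewrite -subr_eq0; apply/eqP/mx_norm_eq0.
have := half_contr (f Z) Z; rewrite -iterSr iterS -gZ.
have := mx_norm_ge0 (f Z - Z); lra.
Qed.

End Contraction.
End FrobeniusContraction.

Section AbsoluteValueEquation.
Variables (R : realType) (n p : nat) (M : 'M[R]_n) (mu : R).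
Hypothesis mu_gt1 : 1 < mu.
Hypothesis M_expanding : forall k (Y : 'M[R]_(n, k)), mu * '[Y] <= '[M *m Y].
Implicit Types G Y Z : 'M[R]_(n, p).

Let mu_gt0 : 0 < mu. Proof. exact: lt_trans mu_gt1. Qed.

Lemma expanding_unitmx : M \in unitmx.
Proof.
apply/negPn/negP; rewrite unitmxE unitfE negbK -det_tr => /det0P [v v_neq0 vM0].
have MvT0 : M *m v^T = 0 by rewrite -[M]trmxK -trmx_mul vM0 trmx0.
have := M_expanding v^T; rewrite MvT0 mxdot0l pmulr_rle0 // leNgt.
by rewrite mxdot_gt0 trmx_eq0 v_neq0.
Qed.

Lemma mulmx_ave_sub G Y Z : M *m Y + mx_abs Y = G -> M *m Z + mx_abs Z = G ->
  M *m (Y - Z) = mx_abs Z - mx_abs Y.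
Proof.
move=> Y_G Z_G; rewrite mulmxBr -[M *m Y](addrK (mx_abs Y)).
by rewrite -[M *m Z](addrK (mx_abs Z)) Y_G Z_G opprB addrC addrA subrK.
Qed.

Lemma ave_uniq G Y Z : M *m Y + mx_abs Y = G -> M *m Z + mx_abs Z = G -> Y = Z.
Proof.
move=> /mulmx_ave_sub Y_G /Y_G MYZ.
have := M_expanding (Y - Z); rewrite MYZ -(opprB (mx_abs Y)) mxdotN.
move=> /le_trans/(_ (mxdot_map_norm_le Y Z)) expand.
apply/eqP; rewrite -subr_eq0 -mxdot_eq0 eq_le mxdot_ge0 andbT.
by rewrite -(pmulr_rle0 _ (_ : 0 < mu - 1)) ?subr_gt0 // mulrBl mul1r subr_le0.
Qed.

Lemma ave_exists G : exists Y, M *m Y + mx_abs Y = G.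
Proof.
pose P Y := invmx M *m (G - mx_abs Y).
have P_contr Y Z : '[P Y - P Z] <= mu^-1 * '[Y - Z].
  rewrite /P -mulmxBr opprB addrC addrA subrK ler_pdivlMl //.
  have := M_expanding (invmx M *m (mx_abs Z - mx_abs Y)).
  rewrite mulKVmx ?expanding_unitmx // => /le_trans; apply.
  by rewrite -(opprB (mx_abs Y)) mxdotN (mxdot_map_norm_le Y Z).
have q_ge0 : 0 <= mu^-1 by rewrite invr_ge0 ltW.
have q_lt1 : mu^-1 < 1 by rewrite invf_lt1.
have [Y PY] := mxdot_contraction_fixed q_ge0 q_lt1 P_contr.
by exists Y; rewrite -{1}PY /P mulKVmx ?expanding_unitmx // subrK.
Qed.

End AbsoluteValueEquation.

Theorem corollary4p1 (R : realType) (n : nat) (A B C F : 'M[R]_n) :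
  B \in unitmx -> C \in unitmx ->
  1 < sigma_min (invmx B *m A *m invmx C) ->
  exists! X : 'M[R]_n, A *m X + B *m mx_abs (C *m X) = F.
Proof.
move=> B_unit C_unit sigma_gt1; set M := invmx B *m A *m invmx C.
have mu_gt1 : 1 < sigma_min M ^+ 2 by rewrite exprn_egt1.
have M_expanding := sigma_min_sqr_mxdot_le M.
have ave_eq X : A *m X + B *m mx_abs (C *m X) = F <->
    M *m (C *m X) + mx_abs (C *m X) = invmx B *m F.
  have -> : M *m (C *m X) + mx_abs (C *m X) =
      invmx B *m (A *m X + B *m mx_abs (C *m X)).
    by rewrite mulmxDr !mulmxA mulmxKV // mulVmx // mul1mx.
  by split => [->|/(can_inj (mulKVmx B_unit))].
have [Y MY] := ave_exists mu_gt1 M_expanding (invmx B *m F).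
exists (invmx C *m Y); split; first by apply/ave_eq; rewrite mulKVmx.
move=> X /ave_eq MX; apply: (can_inj (mulKmx C_unit)); rewrite mulKVmx //.
exact: (ave_uniq mu_gt1 M_expanding MY MX).
Qed.
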